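(* Assume $u_i=1$ for all $i$, $q_1\ge\dots\ge q_n$, and no pool size bound ($G=n$). If $T$ is the regime returned by var-Greedy, then $$\max_{T'\in\tilde{\mathcal T}^B}u(T')\le e\cdot u(T).$$
   Context: Individual $i\in[n]$ is healthy with probability $q_i\in[0,1]$, independently. For $S\subseteq[n]$, $q_S=\prod_{i\in S}q_i$ ($q_\emptyset=1$). A test is a set $t\subseteq[n]$; with unit utilities $u(t)=q_t|t|$. $\tilde{\mathcal T}^B$ is the set of tuples of $B$ pairwise disjoint tests, with welfare $u(T)=\sum_ju(t_j)$. var-Greedy: for $j=1,\dots,B$, start with $t_j=\emptyset$ and repeatedly consider the smallest-index individual $i$ not yet placed in any test; add $i$ to $t_j$ if $u(t_j\cup\{i\})\ge u(t_j)$ (equivalently $q_i\ge |t_j|/(|t_j|+1)$), otherwise close $t_j$ and move to test $j+1$ (also stop if no individuals remain). *)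

From HB Require Import structures.
From mathcomp Require Import all_boot all_order all_algebra.
From mathcomp Require Import reals sequences exp.
Set Implicit Arguments. Unset Strict Implicit. Unset Printing Implicit Defensive.
Import Order.TTheory GRing.Theory Num.Theory.
Local Open Scope ring_scope.

Section GroupTesting.
Variables (R : realType) (n : nat) (q : 'I_n -> R).

Definition qS (t : {set 'I_n}) : R := \prod_(i in t) q i.

(* unit utilities: u(t) = q_t * |t| *)
Definition util (t : {set 'I_n}) : R := qS t * #|t|%:R.

Definition welfare (B : nat) (T : 'I_B -> {set 'I_n}) : R := \sum_(j < B) util (T j).

Definition disjoint_tests (B : nat) (T : 'I_B -> {set 'I_n}) : Prop :=
  forall j k : 'I_B, j != k -> [disjoint T j & T k].

Definition qnat (k : nat) : R := if insub k is Some i then q i else 0.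

(* Greedy growth of one test: current next unplaced index k, current test size s.
   Individual k is added iff q_k >= s/(s+1), i.e. q_k * (s+1) >= s.
   Returns the index of the first individual NOT placed in this test
   (either the individual that caused closing, or n if none remain).
   The fuel m = n suffices since each step increases k and stops at n. *)
Fixpoint grow (m k s : nat) : nat :=
  match m with
  | 0 => k
  | m'.+1 =>
      if (k < n)%N && (s%:R <= qnat k * s.+1%:R) then grow m' k.+1 s.+1 else k
  end.

(* start index of the j-th test of var-Greedy (individuals are placed in index order) *)
Fixpoint gstart (j : nat) : nat :=
  match j with
  | 0 => 0%N
  | j'.+1 => grow n (gstart j') 0
  end.

Definition varGreedy (B : nat) : 'I_B -> {set 'I_n} :=
  fun j => [set i : 'I_n | (gstart j <= i < gstart j.+1)%N].

End GroupTesting.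
Arguments varGreedy {R n} q B _.

From HB Require Import structures.
From mathcomp Require Import all_boot all_order all_algebra.
From mathcomp Require Import reals sequences exp.
From mathcomp Require Import zify ring lra.
Set Implicit Arguments.
Unset Strict Implicit.
Unset Printing Implicit Defensive.
Import Order.TTheory GRing.Theory Num.Theory.
Local Open Scope ring_scope.

(* Let G_j = [a_j, a_{j+1}) be the tests built by var-Greedy, s_j = |G_j| and v_j = q_{a_j}.
   Every member of G_j has q >= (s_j - 1)/s_j, so (1 + 1/m)^m <= e gives s_j v_j <= e u(G_j).
   The individual a_{j+1} that closed G_j has q < s_j/(s_j + 1); as q is sorted, any set t of
   later individuals satisfies (s_j + |t|) q_t <= s_j.  Let M = min_j s_j v_j (M = 0 when
   everybody is placed): no test made of the leftover individuals is worth more than M.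
   Charge each member of G_j the price v_j - M/s_j; a downward induction over the blocks shows
   u(t) <= M + (price of t) for every test t.  Summing over B disjoint tests bounds their
   welfare by B M + sum_j (s_j v_j - M) = sum_j s_j v_j <= e u(greedy). *)

Lemma size_geometric_le (R : realFieldType) (r : R) (s L : nat) :
  0 <= r <= 1 -> r * s.+1%:R <= s%:R -> (s + L)%:R * r ^+ L <= s%:R.
Proof.
move=> /andP[r0 r1] hr; elim: L => [|L IH]; first by rewrite addn0 expr0 mulr1.
apply: le_trans IH; rewrite exprS mulrA ler_wpM2r ?exprn_ge0 //.
rewrite addnS mulrC -addn1 !natrD mulrDr.
have : r * L%:R <= L%:R by rewrite ler_piMl.
by move: hr; rewrite -addn1 natrD mulrDr; lra.
Qed.

(* (1 + 1/m)^m <= e, and the hypothesis says exactly that (1 + 1/m) r >= 1. *)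
Lemma expR1_mul_expr_ge1 (R : realType) (r : R) (m : nat) :
  0 <= r -> m%:R <= r * m.+1%:R -> 1 <= expR 1 * r ^+ m.
Proof.
move=> r0 hm; case: m hm => [|m] hm.
  by rewrite expr0 mulr1; have := expR_ge1Dx (1 : R); lra.
set k := m.+1 in hm *.
have k0 : (0 : R) < k%:R by rewrite ltr0n.
have -> : expR (1 : R) = expR k%:R^-1 ^+ k by rewrite -expRM_natl mulfV // gt_eqF.
have hkr : 1 <= (1 + k%:R^-1) * r.
  rewrite -(ler_pM2l k0) mulr1 mulrA mulrDr mulr1 mulfV ?gt_eqF //.
  by rewrite natr1 mulrC.
have he : (1 + k%:R^-1 : R) ^+ k <= expR k%:R^-1 ^+ k.
  rewrite ler_pXn2r // ?nnegrE ?expR_ge0 ?expR_ge1Dx //.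
  by rewrite addr_ge0 // invr_ge0 ltW.
apply: le_trans (ler_wpM2r (exprn_ge0 _ r0) he).
by rewrite -exprMn exprn_ege1.
Qed.

(* The inductive step of the charging argument, for t = A + t' with A inside block j:
   p = q_A, v = v_j, P = q_t', L = |t'|, a = |A|, s = s_j and F the bound already known for t'. *)
Lemma union_charge_le (R : realFieldType) (p v P L a s M F : R) :
  0 <= p <= v -> v <= 1 -> 0 <= P -> 0 <= L -> (s + L) * P <= s ->
  0 <= a <= s -> 0 < s -> P * L <= F -> M <= F ->
  p * P * (a + L) <= F + a * (v - M / s).
Proof.
move=> /andP[p0 pv] v1 P0 L0 hP /andP[a0 a_s] s0 hF hM.
have -> : F + a * (v - M / s) = (s * F + a * v * s - a * M) / s by field; rewrite gt_eqF.
rewrite ler_pdivlMr //.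
have -> : p * P * (a + L) * s = p * (a * ((s + L) * P) + (s - a) * (P * L)) by ring.
have v0 : 0 <= v := le_trans p0 pv.
have sa0 : 0 <= s - a by rewrite subr_ge0.
have sL0 : 0 <= s + L by rewrite addr_ge0 // ltW.
have hX : 0 <= a * ((s + L) * P) + (s - a) * (P * L) by rewrite addr_ge0 ?mulr_ge0.
have hpv := ler_wpM2r hX pv.
have hva : v * (a * ((s + L) * P)) <= v * (a * s) by rewrite ler_wpM2l // ler_wpM2l.
have hvb : v * ((s - a) * (P * L)) <= (s - a) * (P * L) by rewrite ler_piMl ?mulr_ge0.
have hsa : (s - a) * (P * L) <= (s - a) * F by rewrite ler_wpM2l.
have haM : a * M <= a * F by rewrite ler_wpM2l.
lra.
Qed.

Lemma sum_disjoint_le (R : numDomainType) (I T : finType) (A : I -> {set T}) (f : T -> R) :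
  (forall j k, j != k -> [disjoint A j & A k]) -> (forall x, 0 <= f x) ->
  \sum_j \sum_(x in A j) f x <= \sum_x f x.
Proof.
move=> hA f0; under eq_bigr => j _ do rewrite big_mkcond.
rewrite exchange_big /=; apply: ler_sum => x _.
have [j xj|xA] := pickP (fun j => x \in A j); last by rewrite big1 // => j _; rewrite xA.
rewrite (bigD1 j) //= xj big1 ?addr0 // => k kj.
by rewrite (disjointFl (hA k j kj) xj).
Qed.

Lemma card_interval (n lo hi : nat) : (hi <= n)%N ->
  #|[set i : 'I_n | (lo <= i < hi)%N]| = (hi - lo)%N.
Proof.
move=> hin; rewrite -sum1dep_card -(big_mkord (fun i => lo <= i < hi)%N (fun _ => 1%N)).
rewrite -big_nat_widen //; case: (leqP lo hi) => hlo; last first.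
  by rewrite big_nat_cond big_pred0 => [|i]; lia.
rewrite (@big_cat_nat _ _ _ lo) //= [X in (X + _)%N]big_nat_cond big_pred0 => [|i]; last by lia.
rewrite big_nat_cond (eq_bigl (fun i => (lo <= i < hi) && true)%N) => [|i]; last by lia.
by rewrite -big_nat_cond sum_nat_const_nat muln1.
Qed.

Section VarGreedy.
Variables (R : realType) (n : nat) (q : 'I_n -> R).
Hypothesis hq : forall i, 0 <= q i <= 1.
Hypothesis hsorted : forall i j : 'I_n, (i <= j)%N -> q j <= q i.

Lemma q_ge0 i : 0 <= q i. Proof. by case/andP: (hq i). Qed.

Lemma qS_ge0 (t : {set 'I_n}) : 0 <= qS q t.
Proof. by apply: prodr_ge0 => i _; apply: q_ge0. Qed.

Lemma qS_le_mem (t : {set 'I_n}) x : x \in t -> qS q t <= q x.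
Proof.
move=> xt; rewrite /qS (big_setD1 x xt) /= ler_piMr ?q_ge0 //.
by apply: prodr_ile1 => i _; apply: hq.
Qed.

Lemma qS_le_expr (t : {set 'I_n}) r :
  (forall i, i \in t -> q i <= r) -> qS q t <= r ^+ #|t|.
Proof. by move=> ht; rewrite /qS -prodr_const; apply: ler_prod => i it; rewrite q_ge0 ht. Qed.

Lemma expr_le_qS (t : {set 'I_n}) r :
  0 <= r -> (forall i, i \in t -> r <= q i) -> r ^+ #|t| <= qS q t.
Proof. by move=> r0 ht; rewrite /qS -prodr_const; apply: ler_prod => i it; rewrite r0 ht. Qed.

Lemma qnatE (i : 'I_n) : qnat q i = q i.
Proof. by rewrite /qnat valK. Qed.

Lemma qnat_out k : (n <= k)%N -> qnat q k = 0.
Proof. by move=> h; rewrite /qnat insubN // -leqNgt. Qed.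

Lemma qnat_ge0 k : 0 <= qnat q k.
Proof. by rewrite /qnat; case: insubP => [i _ _|_] //; apply: q_ge0. Qed.

Lemma qnat_le1 k : qnat q k <= 1.
Proof. by rewrite /qnat; case: insubP => [i _ _|_] //; case/andP: (hq i). Qed.

Lemma qnat_nonincr i j : (i <= j)%N -> qnat q j <= qnat q i.
Proof.
move=> hij; case: (ltnP j n) => hj; last by rewrite qnat_out // qnat_ge0.
have hi : (i < n)%N := leq_ltn_trans hij hj.
by rewrite -[i]/(val (Ordinal hi)) -[j]/(val (Ordinal hj)) !qnatE hsorted.
Qed.

Definition accepts (k s : nat) : bool := s%:R <= qnat q k * s.+1%:R.

Lemma grow_spec m k s : let r := grow q m k s in
  [/\ (k <= r)%N, (k <= n -> r <= n)%N,
      (forall i, k <= i < r -> accepts i (s + (i - k)))%N &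
      (n <= k + m -> r < n -> ~~ accepts r (s + (r - k)))%N].
Proof.
elim: m k s => [|m IH] k s /=.
  by split=> // [i|]; lia.
case: ifP => [/andP[kn hk]|hk]; last first.
  split=> // [i|_ kn]; first by lia.
  by rewrite subnn addn0 /accepts; move: hk; rewrite kn /= => ->.
have [h1 h2 h3 h4] := IH k.+1 s.+1; split=> [||i hi|hm hr].
- exact: ltnW h1.
- by move=> _; apply: h2.
- have [->|ne] := eqVneq i k; first by rewrite subnn addn0.
  by have := h3 i; rewrite (_ : (s.+1 + (i - k.+1) = s + (i - k))%N); [apply; lia | lia].
- have := h4 _ hr; rewrite (_ : (s.+1 + (_ - k.+1) = s + (grow q m k.+1 s.+1 - k))%N).
    by apply; lia.
  lia.
Qed.

Local Notation a := (gstart q).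
Local Notation blen j := (a j.+1 - a j)%N.
Local Notation lead j := (qnat q (a j)).

Definition block j : {set 'I_n} := [set i : 'I_n | (a j <= i < a j.+1)%N].

Lemma gstart_le_n j : (a j <= n)%N.
Proof. by elim: j => [|j IH] //=; case: (grow_spec n (a j) 0) => _ ->. Qed.

Lemma gstart_le_succ j : (a j <= a j.+1)%N.
Proof. by case: (grow_spec n (a j) 0). Qed.

Lemma gstart_mono : {homo a : j k / (j <= k)%N}.
Proof. by apply: homo_leq => [//|j k l|j]; [apply: leq_trans | apply: gstart_le_succ]. Qed.

Lemma gstart_accepts j i : (a j <= i < a j.+1)%N -> accepts i (i - a j).
Proof. by case: (grow_spec n (a j) 0) => _ _ h _ /h. Qed.

Lemma gstart_rejects j : (a j.+1 < n)%N -> qnat q (a j.+1) * (blen j).+1%:R < (blen j)%:R.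
Proof.
case: (grow_spec n (a j) 0) => _ _ _ h hl.
by rewrite ltNge; apply: h hl; rewrite leq_addl.
Qed.

Lemma gstart_lt j : (a j < n)%N -> (a j < a j.+1)%N.
Proof.
move=> hj; rewrite ltn_neqAle gstart_le_succ andbT; apply/negP => /eqP he.
by have := @gstart_rejects j; rewrite -he hj subnn mulr1 ltNge qnat_ge0 => /(_ isT).
Qed.

Lemma card_block j : #|block j| = blen j.
Proof. exact/card_interval/gstart_le_n. Qed.

Lemma mem_block_inj i j k : i \in block j -> i \in block k -> j = k.
Proof.
rewrite !inE => /andP[h1 h2] /andP[h3 h4].
by case: (ltngtP j k) => // [/gstart_mono|/gstart_mono]; lia.
Qed.

(* Every later individual has q at most q_{a_{j+1}}, the value that closed block j. *)
Lemma tail_geometric j (t : {set 'I_n}) : (forall i, i \in t -> (a j.+1 <= i)%N) ->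
  (blen j + #|t|)%:R * qS q t <= (blen j)%:R.
Proof.
move=> ht; set r := qnat q (a j.+1).
have hr : r * (blen j).+1%:R <= (blen j)%:R.
  case: (ltnP (a j.+1) n) => h; first exact/ltW/gstart_rejects.
  by rewrite /r qnat_out // mul0r.
apply: le_trans (size_geometric_le #|t| _ hr); last by rewrite qnat_ge0 qnat_le1.
rewrite ler_wpM2l // qS_le_expr // => i /ht hi.
by rewrite -qnatE qnat_nonincr.
Qed.

Lemma blen_lead_le_util j : (blen j)%:R * lead j <= expR 1 * util q (block j).
Proof.
have u0 : 0 <= util q (block j) by rewrite /util mulr_ge0 ?qS_ge0.
have [->|s0] := posnP (blen j); first by rewrite mul0r mulr_ge0 ?expR_ge0.
have ajn : (a j < n)%N by have := gstart_le_n j.+1; lia.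
have [x xa] : {x : 'I_n | val x = a j} by exists (Ordinal ajn).
have xB : x \in block j by rewrite inE xa leqnn; lia.
have hr : accepts (a j.+1).-1 (blen j).-1.
  by rewrite (_ : (blen j).-1 = (a j.+1).-1 - a j)%N; [apply: gstart_accepts | ]; lia.
set r := qnat q (a j.+1).-1.
have hrest : r ^+ (blen j).-1 <= qS q (block j :\ x).
  have -> : (blen j).-1 = #|block j :\ x|.
    by have := cardsD1 x (block j); rewrite xB card_block add1n => ->.
  apply: expr_le_qS => [|i]; first exact: qnat_ge0.
  rewrite !inE => /andP[_ /andP[_ hi]]; rewrite -qnatE qnat_nonincr //; lia.
have he : 1 <= expR 1 * r ^+ (blen j).-1 by exact: expR1_mul_expr_ge1 (qnat_ge0 _) hr.
have -> : lead j = q x by rewrite -xa qnatE.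
rewrite /util /qS (big_setD1 x xB) /= -/(qS q _) card_block.
have -> : expR 1 * (q x * qS q (block j :\ x) * (blen j)%:R) =
          (blen j)%:R * q x * (expR 1 * qS q (block j :\ x)) by ring.
rewrite ler_peMr ?mulr_ge0 ?q_ge0 //.
exact: le_trans he (ler_wpM2l (expR_ge0 1) hrest).
Qed.

Lemma util_leftover_le B j (t : {set 'I_n}) : (j < B)%N -> (a B < n)%N ->
  (forall i, i \in t -> (a B <= i)%N) -> util q t <= (blen j)%:R * lead j.
Proof.
move=> jB aBn ht.
have [->|[x xt]] := set_0Vmem t; first by rewrite /util cards0 mulr0 mulr_ge0 ?qnat_ge0.
have hx : q x <= lead j.
  by rewrite -qnatE qnat_nonincr // (leq_trans _ (ht x xt)) // gstart_mono // ltnW.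
have hrest : (blen j + #|t :\ x|)%:R * qS q (t :\ x) <= (blen j)%:R.
  apply: tail_geometric => i; rewrite inE => /andP[_ /ht]; apply: leq_trans.
  exact: gstart_mono.
have s0 : (0 < blen j)%N.
  by rewrite subn_gt0 gstart_lt // (leq_ltn_trans _ aBn) // gstart_mono // ltnW.
rewrite /util /qS (big_setD1 x xt) -/(qS q _) (cardsD1 x t) xt /=.
apply: (@le_trans _ _ (q x * (blen j)%:R)); last by rewrite mulrC ler_wpM2l ?natr_ge0.
rewrite -mulrA ler_wpM2l ?q_ge0 //; apply: le_trans hrest.
by rewrite mulrC ler_wpM2r ?qS_ge0 // ler_nat leq_add2r.
Qed.

Lemma exists_threshold B : (0 < B)%N -> exists M : R,
  (forall j, (j < B)%N -> M <= (blen j)%:R * lead j) /\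
  (forall t : {set 'I_n}, (forall i, i \in t -> (a B <= i)%N) -> util q t <= M).
Proof.
move=> B0; have [aBn|nB] := ltnP (a B) n; last first.
  exists 0; split=> [j _|t ht]; first by rewrite mulr_ge0 ?qnat_ge0.
  suff -> : t = set0 by rewrite /util cards0 mulr0.
  by apply/setP => i; rewrite inE; apply/negbTE/negP => /ht; have := ltn_ord i; lia.
pose f (j : 'I_B) := (blen j)%:R * lead j.
have [j0 _ hj0] := @arg_minP _ _ _ (Ordinal B0) xpredT f isT.
exists (f j0); split=> [j jB|t]; first exact: (hj0 (Ordinal jB)).
exact: util_leftover_le.
Qed.

Section Charging.
Variables (B : nat) (M : R).
Hypothesis M_le_block : forall j, (j < B)%N -> M <= (blen j)%:R * lead j.
Hypothesis M_ge_leftover :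
  forall t : {set 'I_n}, (forall i, i \in t -> (a B <= i)%N) -> util q t <= M.

(* Block j collects s_j v_j - M in total. *)
Definition price j := lead j - M / (blen j)%:R.

Definition charge (i : 'I_n) := \sum_(j < B) (if i \in block j then price j else 0).

Lemma price_ge0 j : (j < B)%N -> 0 <= price j.
Proof.
move=> jB; rewrite subr_ge0; have [->|s0] := posnP (blen j).
  by rewrite invr0 mulr0 qnat_ge0.
by rewrite ler_pdivrMr ?ltr0n // mulrC M_le_block.
Qed.

Lemma charge_ge0 i : 0 <= charge i.
Proof. by apply: sumr_ge0 => j _; case: ifP => // _; apply: price_ge0. Qed.

Lemma charge_block j i : (j < B)%N -> i \in block j -> charge i = price j.
Proof.
move=> jB ij; rewrite /charge (bigD1 (Ordinal jB)) //= ij big1 ?addr0 // => k kj.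
by case: ifP => // ik; move: kj; rewrite -val_eqE /= (mem_block_inj ij ik) eqxx.
Qed.

Lemma util_le_charge_step j (t : {set 'I_n}) : (j < B)%N ->
  (forall i, i \in t -> (a j <= i)%N) ->
  util q (t :\: block j) <= M + \sum_(i in t :\: block j) charge i ->
  util q t <= M + \sum_(i in t) charge i.
Proof.
move=> jB ht IH; set A := t :&: block j; set t' := t :\: block j.
have hA : \sum_(i in A) charge i = #|A|%:R * price j.
  rewrite (eq_bigr (fun=> price j)) ?sumr_const ?mulr_natl // => i /setIP[_].
  exact: charge_block.
rewrite (big_setID (block j)) /= -/A -/t' hA.
have -> : util q t = qS q A * qS q t' * (#|A| + #|t'|)%:R.
  by rewrite /util /qS (big_setID (block j)) /= cardsID.
have [A0|[x xA]] := set_0Vmem A.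
  by rewrite A0 cards0 /qS big_set0 mul1r mul0r add0r add0n.
have hqA : qS q A <= lead j.
  apply: le_trans (qS_le_mem xA) _; rewrite -qnatE qnat_nonincr //.
  by move: xA; rewrite !inE => /and3P[].
have ht' : (blen j + #|t'|)%:R * qS q t' <= (blen j)%:R.
  by apply: tail_geometric => i; rewrite !inE => /andP[hi /ht]; move: hi; lia.
have hAs : (#|A| <= blen j)%N by rewrite -card_block subset_leq_card // subsetIr.
have s0 : (0 < blen j)%N by apply: leq_trans hAs; rewrite card_gt0; apply/set0Pn; exists x.
rewrite addrCA addrC natrD; apply: union_charge_le.
- by rewrite qS_ge0 hqA.
- exact: qnat_le1.
- exact: qS_ge0.
- exact: ler0n.
- by rewrite -natrD.
- by rewrite ler0n ler_nat.
- by rewrite ltr0n.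
- exact: IH.
- by rewrite lerDl sumr_ge0 // => i _; apply: charge_ge0.
Qed.

Lemma util_le_charge (t : {set 'I_n}) : util q t <= M + \sum_(i in t) charge i.
Proof.
suff h m : (m <= B)%N -> forall t : {set 'I_n}, (forall i, i \in t -> (a (B - m) <= i)%N) ->
    util q t <= M + \sum_(i in t) charge i.
  by apply: (h B) => // i _; rewrite subnn.
elim: m => [|m IH] mB {}t ht.
  apply: le_trans (M_ge_leftover _) _; first by rewrite -(subn0 B).
  by rewrite lerDl sumr_ge0 // => i _; apply: charge_ge0.
have e : (B - m = (B - m.+1).+1)%N by lia.
apply: (@util_le_charge_step (B - m.+1)); [lia | by [] |].
by apply: IH => [|i]; [lia | rewrite !inE e => /andP[hi /ht]; move: hi; lia].
Qed.

Lemma welfare_le_block_charges (T : 'I_B -> {set 'I_n}) : disjoint_tests T ->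
  welfare q T <= \sum_(j < B) (M + #|block j|%:R * price j).
Proof.
move=> hT; apply: (@le_trans _ _ (\sum_(k < B) (M + \sum_(i in T k) charge i))).
  by apply: ler_sum => k _; apply: util_le_charge.
rewrite !big_split lerD2l /=.
have -> : \sum_(j < B) #|block j|%:R * price j = \sum_i charge i.
  rewrite /charge exchange_big /=; apply: eq_bigr => j _.
  by rewrite -big_mkcond /= sumr_const mulr_natl.
by apply: sum_disjoint_le hT _ => i; apply: charge_ge0.
Qed.

Lemma block_charge_le j : (j < B)%N -> M + #|block j|%:R * price j <= expR 1 * util q (block j).
Proof.
move=> jB; apply: le_trans (blen_lead_le_util j); rewrite card_block /price.
have := M_le_block jB; have [->|s0] := posnP (blen j); first by rewrite !mul0r addr0.
by rewrite mulrBr mulrCA mulfV ?pnatr_eq0 -?lt0n // mulr1 addrC subrK.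
Qed.

End Charging.

End VarGreedy.

Theorem mainTheorem13 (R : realType) (n B : nat) (q : 'I_n -> R)
  (hq : forall i, 0 <= q i <= 1)
  (hsorted : forall i j : 'I_n, (i <= j)%N -> q j <= q i)
  (T' : 'I_B -> {set 'I_n}) (hT' : disjoint_tests T') :
  welfare q T' <= expR 1 * welfare q (varGreedy q B).
Proof.
case: B T' hT' => [|B] T' hT'; first by rewrite /welfare !big_ord0 mulr0.
have [M [MB Mleft]] := exists_threshold hq hsorted (ltn0Sn B).
apply: le_trans (welfare_le_block_charges hq hsorted MB Mleft hT') _.
rewrite /welfare mulr_sumr; apply: ler_sum => j _.
exact: (block_charge_le hq hsorted MB (ltn_ord j)).
Qed.
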